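(* For disjunctive guarded systems of type $(A,B)$, considering only runs that are strong-fair or finite: for all $n\ge|B|+1$, if $(A,B)^{(1,n)}$ has a deadlocked run that is strong-fair or finite, then $(A,B)^{(1,n+1)}$ has a deadlocked run that is strong-fair or finite.
   Context: A process template is $U=(Q_U,\mathit{init}_U,\Sigma_U,\delta_U)$ with finite states $Q_U$, initial state $\mathit{init}_U$, finite input alphabet $\Sigma_U$ and guarded transitions $\delta_U\subseteq Q_U\times\Sigma_U\times 2^{Q_A\cup Q_B}\times Q_U$; templates $A,B$ have disjoint state sets and disjoint alphabets, and $|B|=|Q_B|$. The system $(A,B)^{(1,n)}$ consists of one copy of $A$ and $n$ copies $B_1,\dots,B_n$ of $B$; a global state $s$ gives each process a local state, a global input $e$ gives each process an input letter, and initially all processes are in their initial states. In a disjunctive system a guard $g$ is satisfied for process $p$ in $s$ iff some process $p'\ne p$ has $s(p')\in g$. A local transition $(q,\sigma,g,q')$ of $p$ is enabled for $(s,e)$ if $s(p)=q$, $e(p)=\sigma$ and $g$ is satisfied for $p$ in $s$; a process is enabled if one of its transitions is; a global step changes the state of exactly one process along an enabled transition. A path is a sequence of configurations $(s_1,e_1,p_1),(s_2,e_2,p_2),\dots$ where $p_t$ makes the step from $s_t$ to $s_{t+1}$ under $e_t$, a configuration $(s,e,\bot)$ occurs (as the last one) exactly when all processes are disabled, and $e_{t+1}(p)=e_t(p)$ for every process $p$ not moving at moment $t$. A run is a maximal path from the initial state. A run is globally deadlocked if it is finite; an infinite run is locally deadlocked if some process is disabled at all moments from some moment on; a run is deadlocked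 if it is globally or locally deadlocked. A run is strong-fair if it is infinite and every process that is enabled infinitely often moves infinitely often. *)

From mathcomp Require Import all_boot.
Set Implicit Arguments. Unset Strict Implicit. Unset Printing Implicit Defensive.

Record template (Q Sig G : finType) := Template {
  tinit : Q;
  tdelta : {set Q * Sig * {set G} * Q}
}.

Section System.
Variables (QA QB SA SB : finType).
Notation G := (QA + QB)%type.
Variables (A : template QA SA G) (B : template QB SB G).

(* processes of (A,B)^(1,n): None = the copy of A, Some i = B_i *)
Definition proc (n : nat) := option 'I_n.
Definition gstate (n : nat) := (QA * ('I_n -> QB))%type.
Definition ginput (n : nat) := (SA * ('I_n -> SB))%type.

Definition init_state (n : nat) : gstate n := (tinit A, fun _ => tinit B).

Definition loc n (s : gstate n) (p : proc n) : G :=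
  match p with None => inl s.1 | Some i => inr (s.2 i) end.
Definition inp n (e : ginput n) (p : proc n) : (SA + SB)%type :=
  match p with None => inl e.1 | Some i => inr (e.2 i) end.

Definition guard_sat n (s : gstate n) (p : proc n) (g : {set G}) : Prop :=
  exists p' : proc n, p' <> p /\ loc s p' \in g.

Definition enabled n (s : gstate n) (e : ginput n) (p : proc n) : Prop :=
  match p with
  | None => exists g q', (s.1, e.1, g, q') \in tdelta A /\ guard_sat s None g
  | Some i => exists g q', (s.2 i, e.2 i, g, q') \in tdelta B /\ guard_sat s (Some i) g
  end.

Definition all_disabled n (s : gstate n) (e : ginput n) : Prop :=
  forall p : proc n, ~ enabled s e p.

Definition step n (s : gstate n) (e : ginput n) (p : proc n) (s' : gstate n) : Prop :=
  match p with
  | None => exists g q', (s.1, e.1, g, q') \in tdelta A /\ guard_sat s None g /\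
                         s'.1 = q' /\ (forall j, s'.2 j = s.2 j)
  | Some i => exists g q', (s.2 i, e.2 i, g, q') \in tdelta B /\ guard_sat s (Some i) g /\
                           s'.2 i = q' /\ s'.1 = s.1 /\ (forall j, j <> i -> s'.2 j = s.2 j)
  end.

(* A (candidate) run: configurations (rs t, re t, rp t), where rp t = None
   stands for the symbol ⊥.  rlen = None: infinite run; rlen = Some L:
   finite run with configurations at moments 0..L, the last one being
   (rs L, re L, ⊥). Values after moment L are irrelevant. *)
Record run (n : nat) := Run {
  rs : nat -> gstate n;
  re : nat -> ginput n;
  rp : nat -> option (proc n);
  rlen : option nat
}.

Definition in_range (len : option nat) (t : nat) : Prop :=
  match len with None => True | Some L => t < L end.

Definition is_run n (r : run n) : Prop :=
  rs r 0 = init_state n /\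
  (forall t, in_range (rlen r) t ->
     exists p, rp r t = Some p /\ step (rs r t) (re r t) p (rs r t.+1) /\
               (forall p', p' <> p -> inp (re r t.+1) p' = inp (re r t) p')) /\
  (match rlen r with
   | None => True
   | Some L => rp r L = None /\ all_disabled (rs r L) (re r L)
   end).

Definition finite_run n (r : run n) : Prop := exists L, rlen r = Some L.
Definition infinite_run n (r : run n) : Prop := rlen r = None.

Definition moves_at n (r : run n) (p : proc n) (t : nat) : Prop := rp r t = Some p.

Definition globally_deadlocked n (r : run n) : Prop := finite_run r.
Definition locally_deadlocked n (r : run n) : Prop :=
  infinite_run r /\
  exists p : proc n, exists t0, forall t, t0 <= t -> ~ enabled (rs r t) (re r t) p.
Definition deadlocked n (r : run n) : Prop :=
  globally_deadlocked r \/ locally_deadlocked r.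

Definition strong_fair n (r : run n) : Prop :=
  infinite_run r /\
  forall p : proc n,
    (forall t0, exists t, t0 <= t /\ enabled (rs r t) (re r t) p) ->
    (forall t0, exists t, t0 <= t /\ moves_at r p t).

End System.

(* Add to a run of (A,B)^(1,n) a process that repeats every move of a chosen
   B_i right after it.  A disjunctive guard only asks whether some other process
   is in a given local state, so every process sees the same states as before,
   except that B_i sees its clone; this is harmless as soon as some B_k, k <> i,
   shares the state of B_i, which n > |Q_B| forces by pigeonhole whenever the
   B-part of the state no longer changes: at the end of a finite run, and in an
   infinite run in which no B process moves infinitely often.  Otherwise take for
   B_i a process that moves infinitely often: then B_i and the clone move
   infinitely often, and any other process enabled in the new run was enabled at
   a corresponding moment of the old one. *)

From mathcomp Require Import all_boot zify.
From Stdlib Require Import Classical FunctionalExtensionality.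
Set Implicit Arguments. Unset Strict Implicit. Unset Printing Implicit Defensive.

Definition infinitely_often (P : nat -> Prop) := forall t0, exists t, t0 <= t /\ P t.

Lemma infinitely_often_shift (P Q : nat -> Prop) (f : nat -> nat) :
  (forall t, t <= f t) -> (forall t, P t -> Q (f t)) ->
  infinitely_often P -> infinitely_often Q.
Proof.
move=> f_ge PQ HP t0; have [t [le_t0t Pt]] := HP t0.
by exists (f t); split; [exact: leq_trans (f_ge t) | exact: PQ].
Qed.

Lemma infinitely_often_back (P Q : nat -> Prop) :
  (forall t, exists T0, forall T, T0 <= T -> Q T -> exists t', t <= t' /\ P t') ->
  infinitely_often Q -> infinitely_often P.
Proof.
move=> QP HQ t0; have [T0 HT0] := QP t0; have [T [le_T0T QT]] := HQ T0.
exact: HT0 le_T0T QT.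
Qed.

Lemma eventually_forall_fin (I : finType) (Q : I -> nat -> Prop) :
  (forall j, exists tj, forall t, tj <= t -> Q j t) ->
  exists T, forall t, T <= t -> forall j, Q j t.
Proof.
move=> /fin_all_exists [f Hf]; exists (\max_j f j) => t le_t j.
by apply: Hf; apply: leq_trans le_t; apply: leq_bigmax.
Qed.

Lemma exists_collision (T : finType) n (h : 'I_n -> T) :
  #|T| < n -> exists i, exists2 k, k != i & h k = h i.
Proof.
move=> lt_Tn; have /injectivePn [k [i ne_ki eq_h]] : ~~ injectiveb h.
  by apply/injectiveP => /leq_card; rewrite card_ord; lia.
by exists i, k.
Qed.

Section DisjunctiveSystem.
Variables (QA QB SA SB : finType).
Local Notation G := (QA + QB)%type.
Variables (A : template QA SA G) (B : template QB SB G).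

Definition ltrans (x : G) (a : SA + SB) (g : {set G}) (y : G) : Prop :=
  match x, a, y with
  | inl q, inl b, inl q' => (q, b, g, q') \in tdelta A
  | inr q, inr b, inr q' => (q, b, g, q') \in tdelta B
  | _, _, _ => False
  end.

Lemma enabledE n (s : gstate QA QB n) (e : ginput SA SB n) p :
  enabled A B s e p <-> exists g y, ltrans (loc s p) (inp e p) g y /\ guard_sat s p g.
Proof.
case: p => [i|] /=; split.
- by case=> g [q' [tr sat]]; exists g, (inr q').
- by case=> g [[q'|q'] [tr sat]] //; exists g, q'.
- by case=> g [q' [tr sat]]; exists g, (inl q').
- by case=> g [[q'|q'] [tr sat]] //; exists g, q'.
Qed.

Lemma stepE n (s s' : gstate QA QB n) (e : ginput SA SB n) p :
  step A B s e p s' <->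
  exists g, [/\ ltrans (loc s p) (inp e p) g (loc s' p), guard_sat s p g &
                forall p', p' <> p -> loc s' p' = loc s p'].
Proof.
case: p => [i|] /=; split.
- case=> g [q' [tr [sat [-> [eq1 eq2]]]]]; exists g; split=> // -[j|] ne /=.
    by rewrite eq2 // => eq_ji; apply: ne; rewrite eq_ji.
  by rewrite eq1.
- case=> g [tr sat frame]; exists g, (s'.2 i); do 4!split=> //.
    by have [] : loc s' None = loc s None by apply: frame.
  move=> j ne_ji; have [] // : loc s' (Some j) = loc s (Some j).
  by apply: frame => -[].
- case=> g [q' [tr [sat [-> eq2]]]]; exists g; split=> // -[j|] ne //=.
  by rewrite eq2.
- case=> g [tr sat frame]; exists g, s'.1; do 3!split=> //.
  by move=> j; have [] : loc s' (Some j) = loc s (Some j) by apply: frame.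
Qed.

Lemma step_frame n (s s' : gstate QA QB n) (e : ginput SA SB n) p p' :
  step A B s e p s' -> p' <> p -> loc s' p' = loc s p'.
Proof. by move=> /stepE [g [_ _ frame]]; apply: frame. Qed.

Lemma step_enabled n (s s' : gstate QA QB n) (e : ginput SA SB n) p :
  step A B s e p s' -> enabled A B s e p.
Proof. by move=> /stepE [g [tr sat _]]; apply/enabledE; exists g, (loc s' p). Qed.

Definition seen n (s : gstate QA QB n) (p : proc n) (x : G) : Prop :=
  exists p', p' <> p /\ loc s p' = x.

Lemma guard_sat_seen n m (s : gstate QA QB n) p (S : gstate QA QB m) P g :
  (forall x, seen S P x -> seen s p x) -> guard_sat S P g -> guard_sat s p g.
Proof.
move=> sub [P' [ne inP]]; have [|p' [ne' eq_x]] := sub (loc S P'); first by exists P'.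
by exists p'; rewrite eq_x.
Qed.

Lemma enabled_transfer n m (s : gstate QA QB n) e p (S : gstate QA QB m) E P :
  loc S P = loc s p -> inp E P = inp e p -> (forall x, seen S P x -> seen s p x) ->
  enabled A B S E P -> enabled A B s e p.
Proof.
move=> eq_loc eq_inp sub /enabledE [g [y [tr sat]]]; apply/enabledE.
by exists g, y; rewrite -eq_loc -eq_inp; split=> //; apply: guard_sat_seen sat.
Qed.

Lemma step_transfer n m (s s' : gstate QA QB n) e p (S S' : gstate QA QB m) E P :
  step A B s e p s' -> loc S P = loc s p -> inp E P = inp e p ->
  (forall x, seen s p x -> seen S P x) ->
  loc S' P = loc s' p -> (forall P', P' <> P -> loc S' P' = loc S P') ->
  step A B S E P S'.
Proof.
move=> /stepE [g [tr sat _]] eq_loc eq_inp sub eq_loc' frame; apply/stepE.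
by exists g; rewrite eq_loc eq_inp eq_loc'; split=> //; apply: guard_sat_seen sat.
Qed.

Lemma infinite_run_step n (r : run QA QB SA SB n) t :
  is_run A B r -> infinite_run r ->
  exists p, [/\ rp r t = Some p, step A B (rs r t) (re r t) p (rs r t.+1) &
                forall p', p' <> p -> inp (re r t.+1) p' = inp (re r t) p'].
Proof.
move=> [_ [run_step _]] inf_r; have [|p [rp_t [st inp_t]]] := run_step t.
  by rewrite inf_r.
by exists p.
Qed.

Section Clone.
Variables (n : nat) (i : 'I_n).

Definition extend T (h : 'I_n -> T) (x : T) : 'I_n.+1 -> T :=
  fun k => if unlift ord_max k is Some j then h j else x.
Definition add_state (s : gstate QA QB n) (x : QB) : gstate QA QB n.+1 :=
  (s.1, extend s.2 x).
Definition add_input (e : ginput SA SB n) (a : SB) : ginput SA SB n.+1 :=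
  (e.1, extend e.2 a).
Definition lift_proc (p : proc n) : proc n.+1 := omap (lift ord_max) p.
Definition orig (P : proc n.+1) : proc n :=
  if P is Some k then Some (odflt i (unlift ord_max k)) else None.

Local Notation clone := (Some ord_max : proc n.+1).

Variant proc_spec : proc n.+1 -> Prop :=
  | ProcClone : proc_spec clone
  | ProcLift p : proc_spec (lift_proc p).

Lemma procP P : proc_spec P.
Proof.
case: P => [k|]; last exact: (ProcLift None).
case: (unliftP ord_max k) => [j ->|->]; last exact: ProcClone.
exact: (ProcLift (Some j)).
Qed.

Lemma extend_lift T (h : 'I_n -> T) x j : extend h x (lift ord_max j) = h j.
Proof. by rewrite /extend liftK. Qed.

Lemma extend_max T (h : 'I_n -> T) x : extend h x ord_max = x.
Proof. by rewrite /extend unlift_none. Qed.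

Lemma loc_lift s x p : loc (add_state s x) (lift_proc p) = loc s p.
Proof. by case: p => [j|] //=; rewrite extend_lift. Qed.

Lemma loc_clone s x : loc (add_state s x) clone = inr x.
Proof. by rewrite /= extend_max. Qed.

Lemma inp_lift e a p : inp (add_input e a) (lift_proc p) = inp e p.
Proof. by case: p => [j|] //=; rewrite extend_lift. Qed.

Lemma inp_clone e a : inp (add_input e a) clone = inr a.
Proof. by rewrite /= extend_max. Qed.

Lemma lift_proc_neq_clone p : lift_proc p <> clone.
Proof.
case: p => [j|] // eq_max; have := neq_lift ord_max j.
by rewrite (Some_inj eq_max) eqxx.
Qed.

Lemma orig_lift p : orig (lift_proc p) = p.
Proof. by case: p => [j|] //=; rewrite liftK. Qed.

Lemma orig_clone : orig clone = Some i.
Proof. by rewrite /= unlift_none. Qed.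

Lemma lift_proc_inj : injective lift_proc.
Proof. exact: can_inj orig_lift. Qed.

Lemma seen_lift s x p y : seen s p y -> seen (add_state s x) (lift_proc p) y.
Proof.
case=> p' [ne <-]; exists (lift_proc p'); rewrite loc_lift.
by split=> // /lift_proc_inj.
Qed.

Lemma seen_lift_inv s x p y :
  seen (add_state s x) (lift_proc p) y -> y = inr x \/ seen s p y.
Proof.
case=> P' [+ <-]; case: P' / procP => [_|p' ne]; first by left; rewrite loc_clone.
by right; exists p'; rewrite loc_lift; split=> // eq_p; apply: ne; rewrite eq_p.
Qed.

Lemma step_lift s e p s' x a :
  step A B s e p s' ->
  step A B (add_state s x) (add_input e a) (lift_proc p) (add_state s' x).
Proof.
move=> st; apply: (step_transfer st); rewrite ?loc_lift ?inp_lift //.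
  by move=> y; apply: seen_lift.
move=> P'; case: P' / procP => [|p' ne]; rewrite ?loc_clone ?loc_lift //.
by apply: (step_frame st) => eq_p; apply: ne; rewrite eq_p.
Qed.

Lemma step_clone s e s' e' :
  step A B s e (Some i) s' ->
  step A B (add_state s' (s.2 i)) (add_input e' (e.2 i)) clone (add_state s' (s'.2 i)).
Proof.
move=> st; apply: (step_transfer st); rewrite ?loc_clone ?inp_clone //.
  move=> y [p' [ne <-]]; exists (lift_proc p'); split; first exact: lift_proc_neq_clone.
  by rewrite loc_lift (step_frame st ne).
by move=> P'; case: P' / procP => [//|p' _]; rewrite !loc_lift.
Qed.

Definition has_twin (s : gstate QA QB n) := exists2 k, k != i & s.2 k = s.2 i.

Lemma seen_twin s p : has_twin s -> seen s p (inr (s.2 i)).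
Proof.
case=> k ne_ki eq_ki; have [->|ne] := eqVneq p (Some i).
  by exists (Some k); rewrite /= eq_ki; split=> // -[/eqP]; rewrite (negbTE ne_ki).
by exists (Some i); split=> // eq_p; move: ne; rewrite eq_p eqxx.
Qed.

Lemma enabled_lift_back s e a p :
  p <> Some i \/ has_twin s ->
  enabled A B (add_state s (s.2 i)) (add_input e a) (lift_proc p) -> enabled A B s e p.
Proof.
move=> ne_or_twin; apply: enabled_transfer; rewrite ?loc_lift ?inp_lift //.
move=> y /seen_lift_inv [->|//]; case: ne_or_twin => [ne|]; last exact: seen_twin.
by exists (Some i); split=> // /esym.
Qed.

Lemma enabled_orig_back s e P :
  has_twin s ->
  enabled A B (add_state s (s.2 i)) (add_input e (e.2 i)) P -> enabled A B s e (orig P).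
Proof.
move=> twin; case: P / procP => [|p]; rewrite ?orig_clone ?orig_lift; last first.
  by apply: enabled_lift_back; right.
apply: enabled_transfer; rewrite ?loc_clone ?inp_clone //.
move=> y [P' [+ <-]]; case: P' / procP => [//|p _]; rewrite loc_lift.
have [->|ne] := eqVneq p (Some i); first exact: seen_twin.
by exists p; split=> //; apply/eqP.
Qed.

Lemma enabled_lift_back_mid s e s' e' p :
  step A B s e (Some i) s' -> p <> Some i -> inp e' p = inp e p ->
  enabled A B (add_state s' (s.2 i)) (add_input e' (e.2 i)) (lift_proc p) ->
  enabled A B s e p \/ enabled A B s' e' p.
Proof.
move=> st ne eq_inp /enabledE [g [y [tr [P' [ne' inP]]]]].
rewrite loc_lift inp_lift in tr; case: P' / procP ne' inP => [|p'] ne' inP.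
  left; apply/enabledE; exists g, y; rewrite -(step_frame st ne) -eq_inp.
  split=> //; rewrite loc_clone in inP.
  by exists (Some i); split=> // /esym.
right; apply/enabledE; exists g, y; split=> //.
by exists p'; rewrite -(loc_lift _ (s.2 i)); split=> // eq_p; apply: ne'; rewrite eq_p.
Qed.

Variable r : run QA QB SA SB n.
Local Notation moves_i t := (rp r t == Some (Some i)).

Fixpoint nmoves t := if t is t'.+1 then nmoves t' + moves_i t' else 0.

(* [pos T = (t, false)]: moment [T] of the clone run is moment [t] of [r], the
   clone being in the state of [B_i]; [pos T = (t, true)]: [B_i] has just made
   step [t] of [r] and the clone is about to copy it. *)
Fixpoint pos T : nat * bool :=
  if T is T'.+1 then
    let: (t, mid) := pos T' in if ~~ mid && moves_i t then (t, true) else (t.+1, false)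
  else (0, false).

Definition clone_run : run QA QB SA SB n.+1 := Run
  (fun T => let: (t, mid) := pos T in
            add_state (rs r (if mid then t.+1 else t)) ((rs r t).2 i))
  (fun T => let: (t, mid) := pos T in
            add_input (re r (if mid then t.+1 else t)) ((re r t).2 i))
  (fun T => let: (t, mid) := pos T in
            if mid then Some clone else omap lift_proc (rp r t))
  (omap (fun L => L + nmoves L) (rlen r)).

Lemma clone_rlen : rlen clone_run = omap (fun L => L + nmoves L) (rlen r).
Proof. by []. Qed.

Lemma pos_sync_step T t :
  pos T = (t, false) -> pos T.+1 = if moves_i t then (t, true) else (t.+1, false).
Proof. by move=> /= ->. Qed.

Lemma pos_mid_step T t : pos T = (t, true) -> pos T.+1 = (t.+1, false).
Proof. by move=> /= ->. Qed.

Lemma pos_mid T t : pos T = (t, true) -> rp r t = Some (Some i).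
Proof.
case: T => [//|T] /=; case: (pos T) => t' [|] /=; first by case.
by case: ifP => // /eqP rp_t' [<-].
Qed.

Lemma pos_nmoves t : pos (t + nmoves t) = (t, false).
Proof.
elim: t => [//|t IH]; case: (boolP (moves_i t)) => mv.
  have -> : t.+1 + nmoves t.+1 = (t + nmoves t).+2 by rewrite /= mv; lia.
  by apply: pos_mid_step; rewrite (pos_sync_step IH) mv.
have -> : t.+1 + nmoves t.+1 = (t + nmoves t).+1 by rewrite /= (negbTE mv); lia.
by rewrite (pos_sync_step IH) (negbTE mv).
Qed.

Lemma pos_mono : {homo (fun T => (pos T).1) : T T' / T <= T'}.
Proof.
apply: homo_leq => [//|T T' T''|T]; first exact: leq_trans.
by rewrite /=; case: (pos T) => t [|] //=; case: ifP.
Qed.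

Lemma pos_ge t T : t + nmoves t <= T -> t <= (pos T).1.
Proof. by move=> /pos_mono; rewrite /= pos_nmoves. Qed.

Lemma pos_lt t T : T < t + nmoves t -> (pos T).1 < t.
Proof.
elim: t T => [//|t IH] T lt_T; case: (ltnP T (t + nmoves t)) => [/IH/ltnW //|].
rewrite leq_eqVlt => /orP [/eqP <-|gt_T]; first by rewrite pos_nmoves.
case: (boolP (moves_i t)) lt_T => mv lt_T; last first.
  by move: lt_T gt_T; rewrite /= (negbTE mv); lia.
have -> : T = (t + nmoves t).+1 by move: lt_T gt_T; rewrite /= mv; lia.
by rewrite (pos_sync_step (pos_nmoves t)) mv.
Qed.

Lemma clone_run_sync T t :
  pos T = (t, false) ->
  [/\ rs clone_run T = add_state (rs r t) ((rs r t).2 i),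
      re clone_run T = add_input (re r t) ((re r t).2 i) &
      rp clone_run T = omap lift_proc (rp r t)].
Proof. by rewrite /clone_run /= => ->. Qed.

Lemma clone_run_mid T t :
  pos T = (t, true) ->
  [/\ rs clone_run T = add_state (rs r t.+1) ((rs r t).2 i),
      re clone_run T = add_input (re r t.+1) ((re r t).2 i) &
      rp clone_run T = Some clone].
Proof. by rewrite /clone_run /= => ->. Qed.

Lemma clone_run_step T :
  is_run A B r -> in_range (rlen r) (pos T).1 ->
  exists P, [/\ rp clone_run T = Some P,
     step A B (rs clone_run T) (re clone_run T) P (rs clone_run T.+1) &
     forall P', P' <> P -> inp (re clone_run T.+1) P' = inp (re clone_run T) P'].
Proof.
move=> [_ [run_step _]]; case E: (pos T) => [t mid] in_t.
have {in_t} [p [rp_t [st inp_t]]] := run_step t in_t.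
case: mid E => E.
  have eq_p : p = Some i by move: (pos_mid E); rewrite rp_t => -[].
  subst p; have [-> -> ->] := clone_run_mid E.
  have [-> -> _] := clone_run_sync (pos_mid_step E).
  exists clone; split=> //; first exact: step_clone.
  by move=> P'; case: P' / procP => [//|p' _]; rewrite !inp_lift.
have [-> -> ->] := clone_run_sync E; exists (lift_proc p); rewrite rp_t.
have [eq_p|ne] := eqVneq p (Some i).
  subst p; have E' : pos T.+1 = (t, true) by rewrite (pos_sync_step E) rp_t eqxx.
  have [-> -> _] := clone_run_mid E'; split=> //; first exact: step_lift.
  move=> P'; case: P' / procP => [|p' ne']; rewrite ?inp_clone ?inp_lift //.
  by apply: inp_t => eq_p; apply: ne'; rewrite eq_p.
have E' : pos T.+1 = (t.+1, false).
  rewrite (pos_sync_step E) rp_t; case: eqP => // -[eq_p].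
  by move: ne; rewrite eq_p eqxx.
have [-> -> _] := clone_run_sync E'.
have ne_i : Some i <> p by move=> eq_p; move: ne; rewrite eq_p eqxx.
have [-> ] : loc (rs r t.+1) (Some i) = loc (rs r t) (Some i).
  exact: step_frame st ne_i.
have [-> ] : inp (re r t.+1) (Some i) = inp (re r t) (Some i) by apply: inp_t.
split=> //; first exact: step_lift.
move=> P'; case: P' / procP => [|p' ne']; rewrite ?inp_clone ?inp_lift //.
by apply: inp_t => eq_p; apply: ne'; rewrite eq_p.
Qed.

Lemma clone_is_run :
  is_run A B r -> (forall L, rlen r = Some L -> has_twin (rs r L)) ->
  is_run A B clone_run.
Proof.
move=> run_r twin_end; have [init_r [_ end_r]] := run_r; split; [|split].
- rewrite /clone_run /= init_r /add_state /=; congr pair.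
  by apply: functional_extensionality => k; rewrite /extend; case: unlift.
- move=> T in_T; have [|P [rp_T st inp_T]] := clone_run_step (T := T) run_r.
    by move: in_T; rewrite clone_rlen; case: (rlen r) => [L|] //=; apply: pos_lt.
  by exists P.
- rewrite clone_rlen; case E: (rlen r) end_r => [L|] // [rp_L dis_L].
  have [rs_L re_L rp_L'] := clone_run_sync (pos_nmoves L).
  split; first by rewrite rp_L' rp_L.
  move=> P; rewrite rs_L re_L.
  by move=> /(enabled_orig_back (twin_end L E)); apply: dis_L.
Qed.

Lemma clone_moves_lift p :
  infinitely_often (moves_at r p) -> infinitely_often (moves_at clone_run (lift_proc p)).
Proof.
apply: (infinitely_often_shift (f := fun t => t + nmoves t)) => t; first exact: leq_addr.
rewrite /moves_at => rp_t.
by have [_ _ ->] := clone_run_sync (pos_nmoves t); rewrite rp_t.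
Qed.

Lemma clone_moves_clone :
  infinitely_often (moves_at r (Some i)) -> infinitely_often (moves_at clone_run clone).
Proof.
apply: (infinitely_often_shift (f := fun t => (t + nmoves t).+1)) => t.
  exact/leqW/leq_addr.
rewrite /moves_at => rp_t; have E : pos (t + nmoves t).+1 = (t, true).
  by rewrite (pos_sync_step (pos_nmoves t)) rp_t eqxx.
by have [_ _ ->] := clone_run_mid E.
Qed.

Section InfiniteRun.
Hypotheses (run_r : is_run A B r) (inf_r : infinite_run r).

Lemma clone_infinite : infinite_run clone_run.
Proof. by rewrite /infinite_run clone_rlen inf_r. Qed.

Lemma clone_enabled_lift_back T p :
  p <> Some i -> enabled A B (rs clone_run T) (re clone_run T) (lift_proc p) ->
  exists t, (pos T).1 <= t /\ enabled A B (rs r t) (re r t) p.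
Proof.
move=> ne; case E: (pos T) => [t [|]].
  have [-> -> _] := clone_run_mid E.
  have [p' [rp_t st inp_t]] := infinite_run_step t run_r inf_r.
  move: rp_t; rewrite (pos_mid E) => -[eq_p']; subst p'.
  by move=> /(enabled_lift_back_mid st ne (inp_t p ne)) [en|en]; [exists t | exists t.+1].
have [-> -> _] := clone_run_sync E.
by move=> /(enabled_lift_back (or_introl ne)) en; exists t.
Qed.

Section BiMovesInfinitelyOften.
Hypothesis i_moves : infinitely_often (moves_at r (Some i)).

Lemma clone_locally_deadlocked_moving :
  locally_deadlocked A B r -> locally_deadlocked A B clone_run.
Proof.
case=> _ [p0 [t0 dis]]; split; first exact: clone_infinite.
have ne0 : p0 <> Some i.
  move=> eq_p0; have [t [le_t mv]] := i_moves t0; apply: (dis t le_t).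
  have [p [rp_t st _]] := infinite_run_step t run_r inf_r.
  by move: mv; rewrite /moves_at rp_t eq_p0 => -[<-]; apply: step_enabled st.
exists (lift_proc p0), (t0 + nmoves t0) => T le_T.
move=> /(clone_enabled_lift_back ne0) [t [le_t en]]; apply: (dis t) en.
exact: leq_trans (pos_ge le_T) le_t.
Qed.

Lemma clone_strong_fair_moving : strong_fair A B r -> strong_fair A B clone_run.
Proof.
case=> _ fair; split; first exact: clone_infinite.
move=> P; case: P / procP => [_|p en_io]; first exact: clone_moves_clone.
have [->|/eqP ne] := eqVneq p (Some i); first exact: clone_moves_lift.
have /fair : infinitely_often (fun t => enabled A B (rs r t) (re r t) p).
  apply: infinitely_often_back en_io => t; exists (t + nmoves t) => T le_T.
  case/(clone_enabled_lift_back ne) => t' [le_t' en].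
  by exists t'; split=> //; apply: leq_trans (pos_ge le_T) le_t'.
exact: clone_moves_lift.
Qed.

End BiMovesInfinitelyOften.

Section BProcessesIdle.
Variable T1 : nat.
Hypotheses (idle : forall t, T1 <= t -> forall j, rp r t <> Some (Some j))
           (twin : forall t, T1 <= t -> has_twin (rs r t)).

Lemma nmoves_idle t : T1 <= t -> nmoves t = nmoves T1.
Proof.
move=> /subnK <-; elim: (t - T1) => [//|d IH]; rewrite addSn /= IH.
have /negbTE -> : rp r (d + T1) != Some (Some i).
  by apply/eqP; apply: idle; rewrite leq_addl.
by rewrite addn0.
Qed.

Lemma clone_enabled_back_idle T P :
  T1 + nmoves T1 <= T -> enabled A B (rs clone_run T) (re clone_run T) P ->
  enabled A B (rs r (T - nmoves T1)) (re r (T - nmoves T1)) (orig P).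
Proof.
move=> le_T; set t := T - nmoves T1.
have E : pos T = (t, false).
  have le_t : T1 <= t by rewrite /t; lia.
  have {1}-> : T = t + nmoves t by rewrite (nmoves_idle le_t) /t; lia.
  exact: pos_nmoves.
have [-> -> _] := clone_run_sync E; apply: enabled_orig_back; apply: twin.
by rewrite /t; lia.
Qed.

Lemma clone_locally_deadlocked_idle :
  locally_deadlocked A B r -> locally_deadlocked A B clone_run.
Proof.
case=> _ [p0 [t0 dis]]; split; first exact: clone_infinite.
exists (lift_proc p0), (T1 + nmoves T1 + t0) => T le_T.
have le_T' : T1 + nmoves T1 <= T by lia.
by move=> /(clone_enabled_back_idle le_T'); rewrite orig_lift; apply: dis; lia.
Qed.

Lemma clone_strong_fair_idle : strong_fair A B r -> strong_fair A B clone_run.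
Proof.
case=> _ fair; split; first exact: clone_infinite.
move=> P en_io.
have /fair mv_io : infinitely_often (fun t => enabled A B (rs r t) (re r t) (orig P)).
  apply: infinitely_often_back en_io => t; exists (T1 + nmoves T1 + t) => T le_T.
  have le_T' : T1 + nmoves T1 <= T by lia.
  move=> /(clone_enabled_back_idle le_T') en.
  by exists (T - nmoves T1); split=> //; lia.
have orig_A : orig P = None.
  case E: (orig P) mv_io => [j|//] /(_ T1) [t [le_t mv]].
  by case: (idle le_t mv).
case: P / procP en_io mv_io orig_A => [|p] _ mv_io; first by rewrite orig_clone.
rewrite orig_lift => eq_p; rewrite eq_p in mv_io *.
exact: clone_moves_lift.
Qed.

End BProcessesIdle.
End InfiniteRun.
End Clone.

Lemma B_eventually_idle n (r : run QA QB SA SB n) :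
  ~ (exists j, infinitely_often (moves_at r (Some j))) ->
  exists T1, forall t, T1 <= t -> forall j, rp r t <> Some (Some j).
Proof.
move=> no_io; apply: eventually_forall_fin => j; apply: NNPP => not_ev.
apply: no_io; exists j => t0; apply: NNPP => not_mv; apply: not_ev.
by exists t0 => t le_t mv; apply: not_mv; exists t.
Qed.

Lemma B_states_idle n (r : run QA QB SA SB n) T1 :
  is_run A B r -> infinite_run r ->
  (forall t, T1 <= t -> forall j, rp r t <> Some (Some j)) ->
  forall t, T1 <= t -> (rs r t).2 =1 (rs r T1).2.
Proof.
move=> run_r inf_r idle t /subnK <-; elim: (t - T1) => [//|d IH] j.
have [p [rp_t st _]] := infinite_run_step (d + T1) run_r inf_r.
have ne : Some j <> p.
  by move=> eq_p; apply: (idle (d + T1) (leq_addl _ _) j); rewrite rp_t eq_p.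
by rewrite -IH addSn; case: (step_frame st ne).
Qed.

Lemma finite_run_clone n (r : run QA QB SA SB n) :
  #|QB| < n -> is_run A B r -> finite_run r ->
  exists r' : run QA QB SA SB n.+1, is_run A B r' /\ finite_run r'.
Proof.
move=> lt_n run_r [L len_r].
have [i [k ne_ki eq_ki]] := exists_collision (rs r L).2 lt_n.
exists (clone_run i r); split.
  by apply: clone_is_run => // L'; rewrite len_r => -[<-]; exists k.
by exists (L + nmoves i r L); rewrite clone_rlen len_r.
Qed.

Lemma infinite_run_clone n (r : run QA QB SA SB n) :
  #|QB| < n -> is_run A B r -> strong_fair A B r -> locally_deadlocked A B r ->
  exists r' : run QA QB SA SB n.+1,
    [/\ is_run A B r', locally_deadlocked A B r' & strong_fair A B r'].
Proof.
move=> lt_n run_r fair_r dl_r; have inf_r : infinite_run r by case: fair_r.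
have run_clone i : is_run A B (clone_run i r).
  by apply: clone_is_run => // L; rewrite inf_r.
have [[i i_moves]|no_io] := classic (exists i, infinitely_often (moves_at r (Some i))).
  exists (clone_run i r); split=> //.
    exact: clone_locally_deadlocked_moving.
  exact: clone_strong_fair_moving.
have [T1 idle] := B_eventually_idle no_io.
have [i [k ne_ki eq_ki]] := exists_collision (rs r T1).2 lt_n.
have twin t : T1 <= t -> has_twin i (rs r t).
  by move=> le_t; exists k; rewrite // !(B_states_idle run_r inf_r idle le_t).
exists (clone_run i r); split=> //.
  exact: clone_locally_deadlocked_idle twin dl_r.
exact: clone_strong_fair_idle twin fair_r.
Qed.

End DisjunctiveSystem.

Theorem mainTheorem10 (QA QB SA SB : finType)
  (A : template QA SA (QA + QB)%type) (B : template QB SB (QA + QB)%type) (n : nat) :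
  #|QB|.+1 <= n ->
  (exists r : run QA QB SA SB n,
      is_run A B r /\ deadlocked A B r /\ (strong_fair A B r \/ finite_run r)) ->
  (exists r : run QA QB SA SB n.+1,
      is_run A B r /\ deadlocked A B r /\ (strong_fair A B r \/ finite_run r)).
Proof.
move=> lt_n [r [run_r [dl_r fair_or_fin]]].
case len_r: (rlen r) => [L|].
  have [r' [run_r' fin_r']] := finite_run_clone lt_n run_r (ex_intro _ L len_r).
  by exists r'; split=> //; split; [left | right].
have fair_r : strong_fair A B r by case: fair_or_fin => // -[L]; rewrite len_r.
have ldl_r : locally_deadlocked A B r by case: dl_r => // -[L]; rewrite len_r.
have [r' [run_r' ldl_r' fair_r']] := infinite_run_clone lt_n run_r fair_r ldl_r.
by exists r'; split=> //; split; [right | left].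
Qed.
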